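(* Let $X$ be a finite-dimensional real vector space, $\phi:X\to\mathbf{R}$ a strictly convex norm, $K\subseteq X$ closed, $1<\lambda<\infty$, and $K_\lambda=(X\setminus K)\cap\{x:\rho^\phi_K(x)\ge\lambda\}$. Then there exists $\omega_\lambda:\mathbf{R}\to\mathbf{R}$ with $\lim_{t\downarrow0}\omega_\lambda(t)=0$ such that $$\phi(a-b)\le\delta^\phi_K(x)\,\omega_\lambda\bigl(\phi(x-y)/\delta^\phi_K(x)\bigr)$$ for all $x\in K_\lambda$, $y\in X$, $a\in\xi^\phi_K(x)$, $b\in\xi^\phi_K(y)$.
   Context: A norm $\phi$ is strictly convex if $\phi(a+b)=\phi(a)+\phi(b)$ implies $\phi(b)a=\phi(a)b$. For closed $K$: $\delta^\phi_K(x)=\inf\{\phi(y-x):y\in K\}$; $\xi^\phi_K(x)=K\cap\{w:\phi(x-w)=\delta^\phi_K(x)\}$; $\rho^\phi_K(x)=\sup\bigl(\mathbf{R}\cap\{s:\delta^\phi_K(w+s(x-w))=s\,\delta^\phi_K(x)\}\bigr)$ for any $w\in\xi^\phi_K(x)$ (independent of the choice of $w$). *)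

From HB Require Import structures.
From mathcomp Require Import all_boot all_order all_algebra.
From mathcomp Require Import all_classical all_reals all_analysis.
Set Implicit Arguments. Unset Strict Implicit. Unset Printing Implicit Defensive.
Import Order.TTheory GRing.Theory Num.Theory.
Import numFieldNormedType.Exports.
Local Open Scope classical_set_scope.
Local Open Scope ring_scope.

(* The finite-dimensional real vector space X is modelled as 'rV[R]_n. *)

Definition is_norm (R : realType) (n : nat) (phi : 'rV[R]_n -> R) : Prop :=
  [/\ (forall x, phi x = 0 -> x = 0),
      (forall (c : R) x, phi (c *: x) = `|c| * phi x) &
      (forall x y, phi (x + y) <= phi x + phi y)].

Definition strictly_convex (R : realType) (n : nat) (phi : 'rV[R]_n -> R) : Prop :=
  forall a b, phi (a + b) = phi a + phi b -> phi b *: a = phi a *: b.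

Definition dist_phi (R : realType) (n : nat) (phi : 'rV[R]_n -> R)
  (K : set 'rV[R]_n) (x : 'rV[R]_n) : R :=
  inf [set phi (y - x) | y in K].

Definition nearest_phi (R : realType) (n : nat) (phi : 'rV[R]_n -> R)
  (K : set 'rV[R]_n) (x : 'rV[R]_n) : set 'rV[R]_n :=
  K `&` [set w | phi (x - w) = dist_phi phi K x].

(* rho^phi_K(x) = sup { s in R : delta(w + s(x-w)) = s delta(x) } for a
   w in xi^phi_K(x) (the paper shows independence of w); value in \bar R
   so that +oo is allowed. *)
Definition reach_phi (R : realType) (n : nat) (phi : 'rV[R]_n -> R)
  (K : set 'rV[R]_n) (x : 'rV[R]_n) : \bar R :=
  let w := xget 0 (nearest_phi phi K x) in
  ereal_sup [set (s%:E)%E | s in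
    [set s : R | dist_phi phi K (w + s *: (x - w)) = s * dist_phi phi K x]].

Definition K_lam (R : realType) (n : nat) (phi : 'rV[R]_n -> R)
  (K : set 'rV[R]_n) (lam : R) : set 'rV[R]_n :=
  (~` K) `&` [set x | (lam%:E <= reach_phi phi K x)%E].

(* Let w be the nearest point of x used in the definition of the reach and
   d = delta(x).  As rho(x) >= lam > 1 + c, some s > 1 + c has
   delta(w + s (x - w)) = s d, so every nearest point b of y is at distance at
   least s d from w + s (x - w), while phi(x - b) <= d + 2 phi(x - y).  After
   rescaling by d, u = (x - w) / d is a unit vector, v = (x - b) / d satisfies
   phi v <= 1 + 2 phi(x - y) / d, and phi(c u + v) >= 1 + c.  Strict convexity
   forces u = v when phi v <= 1, and compactness of the phi-balls makes this
   uniform: phi(u - v) is small when phi v - 1 is.  Taking y = x shows that the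
   nearest point of x is unique, so a = w. *)

From HB Require Import structures.
From mathcomp Require Import all_boot all_order all_algebra.
From mathcomp Require Import all_classical all_reals all_analysis.
From mathcomp Require Import ring lra.
Import Order.TTheory GRing.Theory Num.Theory.
Import numFieldNormedType.Exports.
Local Open Scope classical_set_scope.
Local Open Scope ring_scope.

Set Implicit Arguments.
Unset Strict Implicit.

Section Norm.
Variables (R : realType) (n : nat) (phi : 'rV[R]_n -> R).
Hypothesis phi_norm : is_norm phi.

Lemma phi_eq0 x : phi x = 0 -> x = 0.
Proof. by case: phi_norm => + _ _; apply. Qed.

Lemma phiZ c x : phi (c *: x) = `|c| * phi x.
Proof. by case: phi_norm. Qed.

Lemma phiD x y : phi (x + y) <= phi x + phi y.
Proof. by case: phi_norm. Qed.

Lemma phi0 : phi 0 = 0.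
Proof. by rewrite -(scale0r 0) phiZ normr0 mul0r. Qed.

Lemma phiN x : phi (- x) = phi x.
Proof. by rewrite -scaleN1r phiZ normrN normr1 mul1r. Qed.

Lemma phi_distC x y : phi (x - y) = phi (y - x).
Proof. by rewrite -phiN opprB. Qed.

Lemma phi_ge0 x : 0 <= phi x.
Proof.
have := phiD x (- x); rewrite subrr phi0 phiN => h.
by rewrite -(@pmulr_rge0 _ 2) // mulr2n mulrDl mul1r.
Qed.

Lemma phi_gt0 x : x != 0 -> 0 < phi x.
Proof.
move=> x_neq0; rewrite lt_def phi_ge0 andbT.
by apply: contra_neq x_neq0; apply: phi_eq0.
Qed.

Lemma phi_dist_dist x y : `|phi x - phi y| <= phi (x - y).
Proof.
have := phiD (x - y) y; have := phiD (y - x) x.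
rewrite !subrK phi_distC ler_norml => *; apply/andP; split; lra.
Qed.

Definition phi_bound := \sum_(j < n) phi (delta_mx 0 j).

Lemma phi_le_mx_norm x : phi x <= phi_bound * `|x|.
Proof.
rewrite {1}(row_sum_delta x) /phi_bound mulr_suml.
elim/big_ind2 : _ => [|a a' b b' ha hb|j _]; first by rewrite phi0.
  by apply: le_trans (phiD _ _) _; apply: lerD.
rewrite phiZ mulrC ler_wpM2l ?phi_ge0 // [leRHS]/Num.norm /= mx_normrE.
by apply/bigmax_geP; right; exists (0, j).
Qed.

Lemma phi_continuous : continuous phi.
Proof.
move=> x; apply/(@cvgrPdist_lt _ _ _ _ (nbhs_filter x)) => e e_gt0.
have M_gt0 : 0 < phi_bound + 1.
  by rewrite ltr_wpDl // sumr_ge0 // => j _; apply: phi_ge0.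
near=> y.
apply: le_lt_trans (phi_dist_dist x y) _; apply: le_lt_trans (phi_le_mx_norm _) _.
apply: (@le_lt_trans _ _ ((phi_bound + 1) * `|x - y|)).
  by rewrite ler_wpM2r // lerDl.
rewrite -ltr_pdivlMl // mulrC; near: y.
by apply: cvgr_dist_lt; rewrite ?divr_gt0.
Unshelve. all: by end_near.
Qed.

Lemma mx_norm_le_phi : exists2 m : R, 0 < m & forall x, m * `|x| <= phi x.
Proof.
pose S := [set x : 'rV[R]_n | `|x| = 1].
have normalize x : x != 0 -> S (`|x|^-1 *: x).
  by move=> x_neq0; rewrite /S /= normrZ normfV normr_id mulVf // normr_eq0.
have [[s0 Ss0]|S0] := pselect (S !=set0); last first.
  exists 1 => // x; have [->|x_neq0] := eqVneq x 0.
    by rewrite normr0 mulr0 phi_ge0.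
  by exfalso; apply: S0; exists (`|x|^-1 *: x); apply: normalize.
have S_compact : compact S.
  apply: bounded_closed_compact.
    by exists 1; split => // M M1 x /= ->; apply: ltW.
  exact: (continuous_closedP _).1 (@norm_continuous _ _) _ (@closed_eq _ _).
have [u /set_mem Su u_min] := compact_EVT_min (ex_intro _ s0 Ss0) S_compact
  (continuous_subspaceT phi_continuous).
have u_neq0 : u != 0.
  by apply: contra_eq_neq Su => ->; rewrite normr0 eq_sym oner_neq0.
exists (phi u); first exact: phi_gt0.
move=> x; have [->|x_neq0] := eqVneq x 0; first by rewrite normr0 mulr0 phi_ge0.
have := u_min _ (mem_set (normalize x x_neq0)).
by rewrite phiZ normfV normr_id -ler_pdivlMr ?normr_gt0 // mulrC.
Qed.

Lemma compact_phi_le r : compact [set x | phi x <= r].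
Proof.
have [m m_gt0 m_le] := mx_norm_le_phi.
apply: bounded_closed_compact.
  exists (r / m); split; first exact: num_real.
  move=> M M_gt x /= phix.
  apply/ltW/(le_lt_trans _ M_gt).
  by rewrite ler_pdivlMr // mulrC (le_trans (m_le x)).
exact: (continuous_closedP _).1 phi_continuous _ (@closed_le _ _).
Qed.

End Norm.

Section StrictConvexity.
Variables (R : realType) (n : nat) (phi : 'rV[R]_n -> R).
Hypotheses (phi_norm : is_norm phi) (phi_sc : strictly_convex phi).
Variable c : R.
Hypothesis c_gt0 : 0 < c.

Lemma strictly_convex_eq u v :
  phi u = 1 -> phi v <= 1 -> 1 + c <= phi (c *: u + v) -> u = v.
Proof.
move=> phiu phiv phicuv.
have phicu : phi (c *: u) = c by rewrite phiZ // phiu mulr1 gtr0_norm.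
have := phiD phi_norm (c *: u) v; rewrite phicu => phicuv_le.
have phiv1 : phi v = 1 by lra.
have /phi_sc : phi (c *: u + v) = phi (c *: u) + phi v by rewrite phicu; lra.
by rewrite phiv1 phicu scale1r => /(scalerI (lt0r_neq0 c_gt0)).
Qed.

Lemma strictly_convex_uniform eps : 0 < eps -> exists2 del : R, 0 < del &
  forall u v, phi u = 1 -> phi v <= 1 + del -> 1 + c <= phi (c *: u + v) ->
  phi (u - v) < eps.
Proof.
move=> eps_gt0.
(* Minimise [phi v] over the compact set of pairs violating the bound: by
   [strictly_convex_eq] the minimum exceeds 1. *)
pose A := [set p : 'rV[R]_n * 'rV[R]_n | [/\ phi p.1 = 1, phi p.2 <= 2,
   1 + c <= phi (c *: p.1 + p.2) & eps <= phi (p.1 - p.2)]].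
have [[p0 Ap0]|A0] := pselect (A !=set0); last first.
  exists 1 => // u v phiu phiv phicuv; rewrite ltNge; apply/negP => phiuv.
  by apply: A0; exists (u, v); split => //; lra.
have phiC := phi_continuous phi_norm.
have closed_pre (f : 'rV[R]_n * 'rV[R]_n -> R) (D : set R) :
    closed D -> continuous f -> closed (f @^-1` D).
  by move=> D_closed fC; apply: (continuous_closedP f).1 fC D D_closed.
have A_closed : closed A.
  have -> : A = (fun p => phi p.1) @^-1` [set x | x = 1] `&`
     (fun p => phi p.2) @^-1` [set x | x <= 2] `&`
     (fun p => phi (c *: p.1 + p.2)) @^-1` [set x | 1 + c <= x] `&`
     (fun p => phi (p.1 - p.2)) @^-1` [set x | eps <= x].
    by apply/seteqP; split => p /=; [case=> *| case=> [[[]]]*].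
  repeat apply: closedI.
  - apply: (closed_pre (fun p => phi p.1) _ (@closed_eq _ _)) => p.
    by apply: continuous_comp; [apply: cvg_fst | apply: phiC].
  - apply: (closed_pre (fun p => phi p.2) _ (@closed_le _ _)) => p.
    by apply: continuous_comp; [apply: cvg_snd | apply: phiC].
  - apply: (closed_pre (fun p => phi (c *: p.1 + p.2)) _ (@closed_ge _ _)) => p.
    apply: continuous_comp; last apply: phiC.
    apply: cvgD; last exact: cvg_snd.
    by apply: cvgZ; [apply: cvg_cst | apply: cvg_fst].
  - apply: (closed_pre (fun p => phi (p.1 - p.2)) _ (@closed_ge _ _)) => p.
    apply: continuous_comp; last apply: phiC.
    by apply: cvgB; [apply: cvg_fst | apply: cvg_snd].
have A_compact : compact A.
  have B_compact := @compact_phi_le _ _ _ phi_norm 2.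
  apply: (subclosed_compact A_closed (compact_setX B_compact B_compact)).
  by move=> [u v] [/= phiu phiv _ _]; split => //=; rewrite phiu; lra.
have snd_phiC : {within A, continuous (fun p => phi p.2)}.
  apply: continuous_subspaceT => p.
  by apply: continuous_comp; [apply: cvg_snd | apply: phiC].
have [[u0 v0] /set_mem [/= phiu0 _ phicuv0 phiuv0] v0_min] :=
  compact_EVT_min (ex_intro _ p0 Ap0) A_compact snd_phiC.
have phiv0_gt1 : 1 < phi v0.
  rewrite ltNge; apply/negP => phiv0_le1.
  have := strictly_convex_eq phiu0 phiv0_le1 phicuv0; move: phiuv0 => /[swap] ->.
  by rewrite subrr phi0 //; lra.
pose del := Num.min 1 ((phi v0 - 1) / 2).
have del_le1 : del <= 1 by rewrite ge_min lexx.
have del_le : del <= (phi v0 - 1) / 2 by rewrite ge_min lexx orbT.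
exists del; first by rewrite lt_min ltr01 /= divr_gt0 // subr_gt0.
move=> u v phiu phiv phicuv; rewrite ltNge; apply/negP => phiuv.
have phiv2 : phi v <= 2 by lra.
have /= := v0_min (u, v) (mem_set (And4 phiu phiv2 phicuv phiuv)); lra.
Qed.

End StrictConvexity.

Section Modulus.
Variables (R : realType) (n : nat) (phi : 'rV[R]_n -> R).
Hypothesis phi_norm : is_norm phi.
Variable c : R.

(* [0] is put in the set so that the supremum is nonnegative even when no
   pair qualifies. *)
Definition modulus_set (t : R) : set R :=
  [set r | r = 0 \/ exists u v, [/\ phi u = 1, phi v <= 1 + 2 * t,
     1 + c <= phi (c *: u + v) & r = phi (u - v)]].

Definition convexity_modulus (t : R) : R := sup (modulus_set t).

Lemma modulus_set_ubound t : has_ubound (modulus_set t).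
Proof.
exists (2 + 2 * `|t|) => _ [->|[u [v [phiu phiv _ ->]]]].
  by rewrite addr_ge0 // mulr_ge0.
have := phiD phi_norm u (- v); rewrite phiN // phiu.
by have := ler_norm t; lra.
Qed.

Lemma convexity_modulus_ge u v t : phi u = 1 -> phi v <= 1 + 2 * t ->
  1 + c <= phi (c *: u + v) -> phi (u - v) <= convexity_modulus t.
Proof.
move=> phiu phiv phicuv; apply: (ub_le_sup (modulus_set_ubound t)).
by right; exists u, v.
Qed.

Lemma convexity_modulus_ge0 t : 0 <= convexity_modulus t.
Proof. by apply: (ub_le_sup (modulus_set_ubound t)); left. Qed.

Lemma convexity_modulus_le t eps : 0 <= eps ->
  (forall u v, phi u = 1 -> phi v <= 1 + 2 * t -> 1 + c <= phi (c *: u + v) ->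
     phi (u - v) <= eps) ->
  convexity_modulus t <= eps.
Proof.
move=> eps_ge0 uv_le; apply: ge_sup; first by exists 0; left.
by move=> _ [->|[u [v [phiu phiv phicuv ->]]]] //; apply: uv_le.
Qed.

Lemma convexity_modulus_rescale x w b s e :
  0 < phi (x - w) -> 1 + c < s ->
  s * phi (x - w) <= phi (w + s *: (x - w) - b) ->
  phi (x - b) <= phi (x - w) + 2 * e ->
  phi (w - b) <= phi (x - w) * convexity_modulus (e / phi (x - w)).
Proof.
set d := phi (x - w) => d_gt0 s_gt sd_le phixb.
have phi_scale y : phi (d^-1 *: y) = phi y / d.
  by rewrite phiZ // gtr0_norm ?invr_gt0 // mulrC.
set u := d^-1 *: (x - w); set v := d^-1 *: (x - b).
have phiu : phi u = 1 by rewrite phi_scale divff ?gt_eqF.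
have phiv : phi v <= 1 + 2 * (e / d).
  rewrite phi_scale ler_pdivrMr //.
  by have -> : (1 + 2 * (e / d)) * d = d + 2 * e by field; rewrite gt_eqF.
have phisuv : s <= phi ((s - 1) *: u + v).
  have -> : (s - 1) *: u + v = d^-1 *: (w + s *: (x - w) - b).
    by apply/rowP => i; rewrite /u /v !mxE; ring.
  by rewrite phi_scale ler_pdivlMr.
have phicuv : 1 + c <= phi (c *: u + v).
  have := phiD phi_norm (c *: u + v) ((s - 1 - c) *: u).
  have -> : c *: u + v + (s - 1 - c) *: u = (s - 1) *: u + v.
    by apply/rowP => i; rewrite !mxE; ring.
  rewrite phiZ // phiu mulr1 gtr0_norm; lra.
have -> : w - b = d *: (v - u).
  by apply/rowP => i; rewrite /u /v !mxE; field; rewrite gt_eqF.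
rewrite phiZ // gtr0_norm // ler_pM2l // phi_distC //.
exact: convexity_modulus_ge.
Qed.

Hypothesis phi_sc : strictly_convex phi.
Hypothesis c_gt0 : 0 < c.

Lemma convexity_modulus0 : convexity_modulus 0 = 0.
Proof.
apply/le_anti; rewrite convexity_modulus_ge0 andbT.
apply: convexity_modulus_le => // u v phiu phiv phicuv.
rewrite mulr0 addr0 in phiv.
by rewrite (strictly_convex_eq phi_norm phi_sc c_gt0 phiu phiv phicuv) subrr phi0.
Qed.

Lemma convexity_modulus_cvg0 : convexity_modulus t @[t --> 0^'+] --> 0.
Proof.
apply/cvgrPdist_le => eps eps_gt0.
have [del del_gt0 uv_lt] := strictly_convex_uniform phi_norm phi_sc c_gt0 eps_gt0.
near=> t.
rewrite sub0r normrN ger0_norm ?convexity_modulus_ge0 //.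
apply: convexity_modulus_le (ltW eps_gt0) _ => u v phiu phiv phicuv.
apply/ltW/uv_lt => //; apply: le_trans phiv _; rewrite lerD2l -ler_pdivlMl //.
by near: t; apply: nbhs_right_le; rewrite mulr_gt0 ?invr_gt0.
Unshelve. all: by end_near.
Qed.

End Modulus.

Section NearestPoints.
Variables (R : realType) (n : nat) (phi : 'rV[R]_n -> R).
Hypothesis phi_norm : is_norm phi.
Variable K : set 'rV[R]_n.

Lemma dist_phi_le z k : K k -> dist_phi phi K z <= phi (k - z).
Proof.
move=> Kk; apply: ge_inf; last by exists k.
by exists 0 => _ [y _ <-]; apply: phi_ge0.
Qed.

Lemma dist_phi_gt0 x w : ~ K x -> nearest_phi phi K x w -> 0 < dist_phi phi K x.
Proof.
move=> xNK [Kw <-]; apply: phi_gt0 => //; rewrite subr_eq0.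
by apply: contraPneq xNK => ->.
Qed.

Lemma nearest_phi_dist_le x y w b : nearest_phi phi K x w ->
  nearest_phi phi K y b -> phi (x - b) <= dist_phi phi K x + 2 * phi (x - y).
Proof.
move=> [Kw phixw] [_ phiyb].
have phiyb_le : phi (y - b) <= dist_phi phi K x + phi (x - y).
  rewrite phiyb; apply: le_trans (dist_phi_le y Kw) _.
  have -> : w - y = (w - x) + (x - y) by rewrite addrA subrK.
  by rewrite -phixw phi_distC //; apply: phiD.
have -> : x - b = (x - y) + (y - b) by rewrite addrA subrK.
by apply: le_trans (phiD phi_norm _ _) _; lra.
Qed.

Lemma K_lam_nearest_le c lam x y a b : 1 + c < lam ->
  K_lam phi K lam x -> nearest_phi phi K x a -> nearest_phi phi K y b ->
  phi (xget 0 (nearest_phi phi K x) - b) <=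
    dist_phi phi K x * convexity_modulus phi c (phi (x - y) / dist_phi phi K x).
Proof.
move=> c_lt [xNK reach_ge] xa yb.
set w := xget 0 _.
have xw : nearest_phi phi K x w := xgetPex 0 (ex_intro _ a xa).
have d_gt0 := dist_phi_gt0 xNK xw.
have c_lt' : ((1 + c)%:E < lam%:E)%E by rewrite lte_fin.
have [_ [s /= dist_s <-]] := ereal_sup_gt (lt_le_trans c_lt' reach_ge).
rewrite -/w lte_fin in dist_s * => s_gt.
have [_ /= phixw] := xw; rewrite -phixw.
apply: (convexity_modulus_rescale phi_norm _ s_gt); rewrite ?phixw //.
  by rewrite -dist_s phi_distC //; apply: dist_phi_le; case: yb.
exact: nearest_phi_dist_le xw yb.
Qed.

End NearestPoints.

Theorem lemma3p2 (R : realType) (n : nat) (phi : 'rV[R]_n -> R)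
  (K : set 'rV[R]_n) (lam : R) :
  is_norm phi -> strictly_convex phi -> closed K -> 1 < lam ->
  exists omega : R -> R,
    (omega t @[t --> 0^'+] --> 0) /\
    (forall x y a b, K_lam phi K lam x ->
       nearest_phi phi K x a -> nearest_phi phi K y b ->
       phi (a - b) <= dist_phi phi K x * omega (phi (x - y) / dist_phi phi K x)).
Proof.
move=> phi_norm phi_sc _ lam_gt1.
pose c := (lam - 1) / 2.
have c_gt0 : 0 < c by rewrite divr_gt0 // subr_gt0.
have c_lt : 1 + c < lam by rewrite /c; lra.
exists (convexity_modulus phi c); split.
  exact: convexity_modulus_cvg0.
move=> x y a b Kx xa yb.
have := K_lam_nearest_le phi_norm c_lt Kx xa xa.
rewrite subrr phi0 // mul0r convexity_modulus0 // mulr0 => wa_le.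
have := K_lam_nearest_le phi_norm c_lt Kx xa yb.
set w := xget 0 _ => wb_le.
have -> : a - b = (a - w) + (w - b) by rewrite addrA subrK.
apply: le_trans (phiD phi_norm _ _) _.
by rewrite phi_distC //; lra.
Qed.
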